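(* Let $u^a_i,u^b_i\in[0,1]$ ($i\in[m]$) be the utilities of two agents $a,b$ for $m$ items, and suppose $\mathrm{OptEnvy}\le-\Delta$ for some $\Delta>0$. Then for all $c>0$, $\sum_{i=1}^m|cu^a_i-u^b_i|\ge(1+c)\Delta$.
   Context: Utilities are additive. An allocation is a partition $(\mathcal{A}_a,\mathcal{A}_b)$ of $[m]$; $\mathrm{Envy}_{a\to b}=\sum_{i\in\mathcal{A}_b}u^a_i-\sum_{i\in\mathcal{A}_a}u^a_i$, $\mathrm{Envy}_{b\to a}=\sum_{i\in\mathcal{A}_a}u^b_i-\sum_{i\in\mathcal{A}_b}u^b_i$, $\mathrm{Envy}=\max\{\mathrm{Envy}_{a\to b},\mathrm{Envy}_{b\to a}\}$, and $\mathrm{OptEnvy}=\min$ of $\mathrm{Envy}$ over all allocations. *)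

From mathcomp Require Import all_boot all_order all_algebra.
Set Implicit Arguments. Unset Strict Implicit. Unset Printing Implicit Defensive.
Import Order.TTheory GRing.Theory Num.Theory.
Local Open Scope ring_scope.

(* Two agents a, b; m items indexed by 'I_m; additive utilities ua, ub.
   An allocation (A_a, A_b) is a partition of [m]; we represent it by
   A := A_a : {set 'I_m}, with A_b := ~: A. *)
Definition envy_ab (R : realDomainType) (m : nat) (ua : 'I_m -> R) (A : {set 'I_m}) : R :=
  \sum_(i in ~: A) ua i - \sum_(i in A) ua i.
Definition envy_ba (R : realDomainType) (m : nat) (ub : 'I_m -> R) (A : {set 'I_m}) : R :=
  \sum_(i in A) ub i - \sum_(i in ~: A) ub i.
Definition envy (R : realDomainType) (m : nat) (ua ub : 'I_m -> R) (A : {set 'I_m}) : R :=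
  Num.max (envy_ab ua A) (envy_ba ub A).
(* Minimum of envy over all allocations (the seed envy set0 is itself one of
   the allocations, so this is exactly the minimum). *)
Definition optEnvy (R : realDomainType) (m : nat) (ua ub : 'I_m -> R) : R :=
  \big[Num.min/envy ua ub set0]_(A : {set 'I_m}) envy ua ub A.

(** Take an allocation [A] attaining [OptEnvy].  Splitting [\sum_i |c u^a_i - u^b_i|]
    along [A] and its complement and dropping the absolute values with opposite signs
    on the two parts bounds it below by [- (c Envy_{a->b}(A) + Envy_{b->a}(A))], and
    both envies are at most [- Delta]. *)
From mathcomp Require Import all_boot all_order all_algebra.
From mathcomp Require Import ring lra.
Import Order.TTheory GRing.Theory Num.Theory.
Local Open Scope ring_scope.

Lemma bigmin_seed_attained {d} {T : orderType d} {I : finType} (F : I -> T) (j : I) :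
  exists i, \big[Order.min/F j]_i F i = F i.
Proof.
apply: (big_ind (fun x => exists i, x = F i)); first by exists j.
- by move=> x y [i ->] [k ->]; case: leP => _; [exists i | exists k].
- by move=> i _; exists i.
Qed.

Lemma optEnvy_attained {R : realDomainType} {m : nat} (ua ub : 'I_m -> R) :
  exists A, optEnvy ua ub = envy ua ub A.
Proof. exact: bigmin_seed_attained. Qed.

Lemma ler_sum_setC_norm {R : realDomainType} {I : finType} (f : I -> R) (A : {set I}) :
  \sum_(i in A) f i - \sum_(i in ~: A) f i <= \sum_i `|f i|.
Proof.
have -> : \sum_(i in ~: A) f i = \sum_(i | i \notin A) f i.
  by apply: eq_bigl => i; rewrite in_setC.
rewrite [leRHS](bigID (mem A)) /= -sumrN; apply: lerD; apply: ler_sum => i _.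
  exact: ler_norm.
by rewrite -normrN ler_norm.
Qed.

Lemma sum_setC_scaled_envy {R : realDomainType} {m : nat} (ua ub : 'I_m -> R)
    (A : {set 'I_m}) (c : R) :
  \sum_(i in A) (c * ua i - ub i) - \sum_(i in ~: A) (c * ua i - ub i)
    = - (c * envy_ab ua A + envy_ba ub A).
Proof. rewrite /envy_ab /envy_ba !sumrB -!mulr_sumr; ring. Qed.

Theorem lemma10 (R : realFieldType) (m : nat) (ua ub : 'I_m -> R) (Delta : R) :
  (forall i, 0 <= ua i <= 1) -> (forall i, 0 <= ub i <= 1) ->
  0 < Delta -> optEnvy ua ub <= - Delta ->
  forall c : R, 0 < c ->
    \sum_(i < m) `|c * ua i - ub i| >= (1 + c) * Delta.
Proof.
move=> _ _ _ hopt c hc.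
have [A hA] := optEnvy_attained ua ub.
move: hopt; rewrite hA /envy ge_max => /andP[hab hba].
have hcab : c * envy_ab ua A <= c * - Delta by rewrite ler_pM2l.
have := ler_sum_setC_norm (fun i => c * ua i - ub i) A.
rewrite sum_setC_scaled_envy; lra.
Qed.
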